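(* Let $\mathcal{S}$ be a set and $T:\bigcup_{n\in\mathbb{N}}\mathcal{S}^n\to\mathbb{R}_{\ge0}$ satisfy $T(AB)\ge T(A)+T(B)$ for all $A,B$ (where $AB$ is concatenation) and $T(s)=0$ for every single element $s\in\mathcal{S}$. Let $\epsilon>0$, $t>0$ and $n\in\mathbb{N}$. Then for every $U\in\mathcal{S}^n$ with $T(U)\le t$, the number of blocks of the partition $P_{U;T,\epsilon}$ produced by the $(T,\epsilon)$ division scheme satisfies $$|P_{U;T,\epsilon}| \leq \log_2(4n)\Big(1+\frac{t}{\epsilon}\Big).$$
   Context: The $(T,\epsilon)$ division scheme applied to $U\in\mathcal{S}^n$: if $T(U)\le\epsilon$, stop and output $U$; otherwise split $U = U_1'U_2'$ into two contiguous parts with $|U_1'| = \lfloor |U|/2\rfloor$ and $|U_2'| = |U|-|U_1'|$. At each subsequent step, every current part $U_i'$ with $T(U_i')>\epsilon$ is split into two almost equal contiguous parts in the same way; repeat until every part has $T\le\epsilon$. The resulting partition of $[n]$ into contiguous blocks is $P_{U;T,\epsilon}$, and $|P_{U;T,\epsilon}|$ is its number of blocks. *)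

From mathcomp Require Import all_boot all_order all_algebra.
From mathcomp Require Import reals exp.
Set Implicit Arguments. Unset Strict Implicit. Unset Printing Implicit Defensive.
Import Order.TTheory GRing.Theory Num.Theory.
Local Open Scope ring_scope.

(* The (T,eps) division scheme: words of S^n are sequences [seq S]; a block
   is a contiguous subword. [division_fuel k T eps U] performs the recursive
   halving (first part of length floor(|U|/2)) with recursion depth at most k.
   With k = size U the fuel never runs out under the standing hypotheses
   (parts of size <= 1 have T = 0 <= eps). *)
Fixpoint division_fuel (S : Type) (R : realType) (k : nat)
    (T : seq S -> R) (eps : R) (U : seq S) : seq (seq S) :=
  match k with
  | 0 => [:: U]
  | k'.+1 =>
      if T U <= eps then [:: U]
      else division_fuel k' T eps (take (size U)./2 U)
           ++ division_fuel k' T eps (drop (size U)./2 U)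
  end.

Definition division (S : Type) (R : realType) (T : seq S -> R) (eps : R)
    (U : seq S) : seq (seq S) := division_fuel (size U) T eps U.

Definition log2 (R : realType) (x : R) : R := ln x / ln 2.

From mathcomp Require Import all_boot all_order all_algebra.
From mathcomp Require Import reals exp.
From mathcomp Require Import lra zify.
Import Order.TTheory GRing.Theory Num.Theory.
Local Open Scope ring_scope.

(* A word of length at most 2^m is cut into at most 1 + m T(U)/eps blocks.
   Each split adds one block and happens only on a part with T > eps; the parts
   on one level of the halving tree are disjoint subwords of U, so by
   superadditivity each of the m levels has fewer than T(U)/eps splits.  With
   2^(m-1) <= n < 2^m, m <= 1 + log2 n <= log2 (4n). *)

Lemma size_take_half {A : Type} {s : seq A} {k : nat} :
  (size s <= k.*2)%N -> (size (take (size s)./2 s) <= k)%N.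
Proof. by rewrite size_take -divn2 -muln2 => ?; case: ltnP => ?; lia. Qed.

Lemma size_drop_half {A : Type} {s : seq A} {k : nat} :
  (size s <= k.*2)%N -> (size (drop (size s)./2 s) <= k)%N.
Proof. by rewrite size_drop -divn2 -muln2 => ?; lia. Qed.

Lemma split_count_le {R : realFieldType} (m : nat) (x a b : R) :
  1 < x -> a + b <= x ->
  (1 + m%:R * a) + (1 + m%:R * b) <= 1 + m.+1%:R * x.
Proof.
move=> x_gt1 ab_le_x; have m_ge0 : (0 : R) <= m%:R by [].
have := ler_wpM2l m_ge0 ab_le_x; rewrite -natr1; lra.
Qed.

Section DivisionScheme.

Context {S : Type} {R : realType} {T : seq S -> R} {eps : R}.
Hypothesis T_ge0 : forall A, 0 <= T A.
Hypothesis T_super : forall A B, T A + T B <= T (A ++ B).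
Hypothesis T_single : forall s, T [:: s] = 0.
Hypothesis eps_gt0 : 0 < eps.

Lemma T_nil : T [::] = 0.
Proof. by apply/eqP; rewrite eq_le T_ge0 andbT; have := T_super [::] [::]; lra. Qed.

Lemma T_small U : (size U <= 1)%N -> T U = 0.
Proof. by case: U => [|a [|b U]] //= _; rewrite ?T_nil ?T_single. Qed.

Lemma size_division_fuel_le m k U : (size U <= 2 ^ m)%N ->
  (size (division_fuel k T eps U))%:R <= 1 + m%:R * (T U / eps).
Proof.
have one_block V (j : nat) : 1 <= 1 + j%:R * (T V / eps) :> R.
  by rewrite lerDl mulr_ge0 // divr_ge0 // ltW.
elim: m k U => [|m IHm] [|k] U sizeU /=; try exact: one_block.
  by case: ifP => [_|]; [exact: one_block | rewrite T_small ?(ltW eps_gt0)].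
case: ifP => [_|TU_le]; first exact: one_block.
have TU_gt : 1 < T U / eps by rewrite ltr_pdivlMr // mul1r ltNge TU_le.
rewrite expnS mul2n in sizeU.
set A := take _ U; set B := drop _ U.
have T_split : T A / eps + T B / eps <= T U / eps.
  rewrite -mulrDl ler_pM2r ?invr_gt0 //.
  by rewrite -[X in _ <= T X](cat_take_drop (size U)./2 U).
have IH_halves :=
  lerD (IHm k A (size_take_half sizeU)) (IHm k B (size_drop_half sizeU)).
by rewrite size_cat natrD (le_trans IH_halves) ?split_count_le.
Qed.

End DivisionScheme.

Lemma log2_mul4 {R : realType} (x : R) : 0 < x -> log2 (4 * x) = 2 + log2 x.
Proof.
move=> x_gt0; have ln2_gt0 : 0 < ln (2 : R) by rewrite ln_gt0 // ltr1n.
rewrite /log2 lnM ?posrE // -[4]/(2 * 2)%:R natrM -expr2 lnXn // mulrDl.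
by rewrite mulrnAl mulfV ?gt_eqF.
Qed.

Lemma trunc_log2_le_log2 {R : realType} (n : nat) : (0 < n)%N ->
  (trunc_log 2 n)%:R <= log2 (n%:R : R).
Proof.
move=> n_gt0; have ln2_gt0 : 0 < ln (2 : R) by rewrite ln_gt0 // ltr1n.
rewrite /log2 ler_pdivlMr // mulr_natl -lnXn // ler_ln ?posrE ?ltr0n ?exprn_gt0 //.
by rewrite -natrX ler_nat trunc_logP.
Qed.

Theorem lemma5p18 (S : Type) (R : realType) (T : seq S -> R)
    (T_ge0 : forall A, 0 <= T A)
    (T_super : forall A B, T A + T B <= T (A ++ B))
    (T_single : forall s, T [:: s] = 0)
    (eps t : R) (heps : 0 < eps) (ht : 0 < t) (n : nat) (hn : (0 < n)%N)
    (U : seq S) (hU : size U = n) (hTU : T U <= t) :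
  (size (division T eps U))%:R <= log2 (4 * n%:R) * (1 + t / eps).
Proof.
set m := trunc_log 2 n.
have sizeU : (size U <= 2 ^ m.+1)%N by rewrite hU ltnW // trunc_log_ltn.
apply: le_trans (size_division_fuel_le T_ge0 T_super T_single heps _ _ _ sizeU) _.
have m_le : m%:R <= log2 (n%:R : R) := trunc_log2_le_log2 n hn.
have x_ge0 : 0 <= T U / eps := divr_ge0 (T_ge0 U) (ltW heps).
have x_le : T U / eps <= t / eps by rewrite ler_pM2r ?invr_gt0.
rewrite log2_mul4 ?ltr0n // -natr1.
set L := log2 _ in m_le *; set x := T U / eps in x_ge0 x_le *.
have m_ge0 : (0 : R) <= m%:R by [].
nra.
Qed.
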